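(* Let $G=G(I,P;E)$ be a pinned graph and $\mathbf p$ a configuration in $\mathbb R^2$ such that the pinned framework $G(\mathbf p)$ is an independent 1-DOF linkage, and let $d$ be a driver of $G(\mathbf p)$ which is active. Then the driver replacement $\overline G(\mathbf p)$ is an isostatic pinned framework (and hence $\overline G$ is a pinned isostatic graph).
   Context: A pinned graph $G(I,P;E)$ has inner vertices $I$, pinned vertices $P$, and edges $E$ each with at least one endpoint in $I$. In the pinned framework $G(\mathbf p)$ the pinned vertices are fixed; a first-order motion assigns $\mathbf p'_i\in\mathbb R^2$ to inner vertices ($\mathbf p'_v=\mathbf 0$ for $v\in P$) with $(\mathbf p_i-\mathbf p_j)\cdot(\mathbf p'_i-\mathbf p'_j)=0$ for every edge $ij$; a self-stress is an assignment of scalars $\lambda_{ij}$ to edges with $\sum_{j:ij\in E}\lambda_{ij}(\mathbf p_i-\mathbf p_j)=\mathbf 0$ at each inner vertex. $G(\mathbf p)$ is independent if its only self-stress is zero; it is an independent 1-DOF linkage if it is independent and its space of first-order motions is one-dimensional (so $|E|=2|I|-1$); it is isostatic if it is independent and has only the zero first-order motion. A driver of a 1-DOF linkage is one of: (a) a piston on a pair of vertices $a,b$; (b) an angle driver on an angle $\angle abc$ formed by edges $ab,bc$ at an inner vertex $b$ of degree $\ge3$; (c) an angle driver on an angle $\angle abc$ formed by edges $ab,bc$ at an inner vertex $b$ of degree $2$; (d) an angle driver on an angle $\angle a p_i p_j$ where $p_i,p_j\in P$, $a\in I$ and $ap_i\in E$. The brace pair of the driver is $\{a,b\}$ in case (a),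 $\{a,c\}$ in cases (b),(c), and $\{a,p_j\}$ in case (d). The driver is active at $G(\mathbf p)$ if for a non-zero first-order motion $\mathbf p'$, the brace pair $\{x,y\}$ has non-zero strain: $(\mathbf p_x-\mathbf p_y)\cdot(\mathbf p'_x-\mathbf p'_y)\ne 0$ (equivalently, after appending the row of the brace pair to the rigidity matrix, the system $R\mathbf p'=(0,\dots,0,s_d)^T$ is solvable for every $s_d$). The driver replacement $\overline G$ is: in case (a), $G$ plus the bar $ab$; in case (b), $G$ plus the bar $ac$; in case (c), $G$ plus the bar $ac$ with the vertex $b$ and its two edges removed; in case (d), $G$ with $a$ made into an additional pinned vertex (edges between pinned vertices being discarded). $\overline G(\mathbf p)$ uses the same positions $\mathbf p$. A pinned isostatic graph is one satisfying $|E|=2|I|$ and, for every subgraph $G'(I',P';E')$ with $E'\neq\emptyset$: $|E'|\le 2|I'|$ if $|P'|\ge 2$, $|E'|\le2|I'|-1$ if $|P'|=1$, $|E'|\le 2|I'|-3$ if $P'=\emptyset$. *)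

(* The plane R^2 is 'rV[R]_2 over an arbitrary real field R
   (the statement is purely linear-algebraic). *)
From HB Require Import structures.
From mathcomp Require Import all_boot all_order all_algebra.
Set Implicit Arguments. Unset Strict Implicit. Unset Printing Implicit Defensive.
Import Order.TTheory GRing.Theory Num.Theory.
Local Open Scope ring_scope.

Section PinnedDefs.
Variables (R : realFieldType) (V : finType).

(* A pinned graph G(I,P;E) on the ambient vertex type V: vertices outside
   I :|: P are absent.  Edges are a symmetric irreflexive relation. *)
Record pgraph := PGraph { inner : {set V}; pinned : {set V}; edge : rel V }.

Definition pinned_graph (G : pgraph) : Prop :=
  [/\ [disjoint inner G & pinned G],
      (forall x y, edge G x y = edge G y x),
      (forall x, ~~ edge G x x),
      (forall x y, edge G x y ->
          (x \in inner G :|: pinned G) && (y \in inner G :|: pinned G)) &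
      (forall x y, edge G x y -> (x \in inner G) || (y \in inner G))].

Definition ecount (E : rel V) : nat := #|[set e : {set V} | [exists x, exists y, E x y && (e == [set x; y])]]|.

Definition deg (G : pgraph) (b : V) : nat := #|[set x | edge G b x]|.

Definition dotp (u v : 'rV[R]_2) : R := \sum_(k < 2) u 0 k * v 0 k.

Definition motion (G : pgraph) (p q : V -> 'rV[R]_2) : Prop :=
  (forall v, v \notin inner G -> q v = 0) /\
  (forall x y, edge G x y -> dotp (p x - p y) (q x - q y) = 0).

Definition self_stress (G : pgraph) (p : V -> 'rV[R]_2) (lam : V -> V -> R) : Prop :=
  [/\ (forall x y, lam x y = lam y x),
      (forall x y, ~~ edge G x y -> lam x y = 0) &
      (forall i, i \in inner G -> \sum_j lam i j *: (p i - p j) = 0)].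

Definition independent (G : pgraph) (p : V -> 'rV[R]_2) : Prop :=
  forall lam, self_stress G p lam -> forall x y, lam x y = 0.

Definition indep_1dof (G : pgraph) (p : V -> 'rV[R]_2) : Prop :=
  independent G p /\
  exists q0, [/\ motion G p q0, (exists v, q0 v != 0) &
    forall q, motion G p q -> exists c : R, forall v, q v = c *: q0 v].

Definition isostatic (G : pgraph) (p : V -> 'rV[R]_2) : Prop :=
  independent G p /\ forall q, motion G p q -> forall v, q v = 0.

Inductive driver :=
| Piston of V & V
| AngleDeg3 of V & V & V
| AngleDeg2 of V & V & V
| AnglePin of V & V & V.

Definition valid_driver (G : pgraph) (d : driver) : Prop :=
  match d with
  | Piston a b => [/\ a != b, a \in inner G :|: pinned G & b \in inner G :|: pinned G]
  | AngleDeg3 a b c =>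
      [/\ edge G a b, edge G b c, a != c, b \in inner G & 3 <= deg G b]%N
  | AngleDeg2 a b c =>
      [/\ edge G a b, edge G b c, a != c, b \in inner G & deg G b = 2]%N
  | AnglePin a pi pj =>
      [/\ pi \in pinned G, pj \in pinned G, pi != pj, a \in inner G & edge G a pi]
  end.

Definition brace (d : driver) : V * V :=
  match d with
  | Piston a b => (a, b)
  | AngleDeg3 a _ c => (a, c)
  | AngleDeg2 a _ c => (a, c)
  | AnglePin a _ pj => (a, pj)
  end.

Definition active (G : pgraph) (p : V -> 'rV[R]_2) (d : driver) : Prop :=
  let xy := brace d in
  exists q, [/\ motion G p q, (exists v, q v != 0) &
    dotp (p xy.1 - p xy.2) (q xy.1 - q xy.2) != 0].

Definition add_edge (E : rel V) (a c : V) : rel V :=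
  fun x y => E x y || ((x == a) && (y == c)) || ((x == c) && (y == a)).

Definition replacement (G : pgraph) (d : driver) : pgraph :=
  match d with
  | Piston a b => PGraph (inner G) (pinned G) (add_edge (edge G) a b)
  | AngleDeg3 a _ c => PGraph (inner G) (pinned G) (add_edge (edge G) a c)
  | AngleDeg2 a b c =>
      PGraph (inner G :\ b) (pinned G)
        (add_edge (fun x y => [&& edge G x y, x != b & y != b]) a c)
  | AnglePin a _ _ =>
      PGraph (inner G :\ a) (a |: pinned G)
        (fun x y => edge G x y && ~~ ((x \in a |: pinned G) && (y \in a |: pinned G)))
  end.

Definition subgraph (G : pgraph) (I' P' : {set V}) (E' : rel V) : Prop :=
  [/\ I' \subset inner G, P' \subset pinned G,
      (forall x y, E' x y -> edge G x y),
      (forall x y, E' x y = E' y x) &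
      (forall x y, E' x y ->
         [&& x \in I' :|: P', y \in I' :|: P' & (x \in I') || (y \in I')])].

Definition pinned_isostatic_graph (G : pgraph) : Prop :=
  ecount (edge G) = (2 * #|inner G|)%N /\
  forall I' P' E', subgraph G I' P' E' -> (exists x y, E' x y) ->
    [/\ (2 <= #|P'| -> ecount E' <= 2 * #|I'|)%N,
        (#|P'| = 1 -> ecount E' + 1 <= 2 * #|I'|)%N &
        (#|P'| = 0 -> ecount E' + 3 <= 2 * #|I'|)%N].

End PinnedDefs.

(* Let q be an active motion, i.e. one straining the brace
   pair of the driver.  Since the motions of G(p) form a line, any motion that
   leaves the brace pair unstrained is zero (linkage_motion_zero).  For each
   kind of driver we show that motions of the replacement give such motions of
   G (for a 2-valent vertex b, by re-inserting b: its velocity is fixed by the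
   two non-collinear bars at b), and that self-stresses of the replacement give
   self-stresses of G: by virtual work, the work of a stress on the strains of
   q is twice the work of its resultants on q, which forces the new bar (or the
   resultant at the newly pinned vertex) to carry no extra force.

   For an independent framework the rigidity rows are
   free, so by a Gram / rank-nullity argument dim(motions) + |E| = 2|I|
   (motion_dim_count).  Subframeworks of an isostatic framework are
   independent, and the trivial motions (a rotation about the single pinned
   vertex, resp. two translations and a rotation) give the Maxwell counts
   |E'| <= 2|I'| - 1, resp. 2|I'| - 3.  Hence the underlying graph of an
   isostatic framework is a pinned isostatic graph. *)
From HB Require Import structures.
From mathcomp Require Import all_boot all_order all_algebra.
Set Implicit Arguments. Unset Strict Implicit. Unset Printing Implicit Defensive.
Import Order.TTheory GRing.Theory Num.Theory.
Local Open Scope ring_scope.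

Section PlaneGeometry.
Variable R : realFieldType.
Implicit Types (u v w : 'rV[R]_2) (a b : R).

Definition idx1 : 'I_2 := ord_max.

Lemma row2P u v : u 0 0 = v 0 0 -> u 0 idx1 = v 0 idx1 -> u = v.
Proof.
move=> h0 h1; apply/rowP=> -[[|[|k]] hk] //.
  by rewrite (_ : Ordinal hk = 0) //; apply: val_inj.
by rewrite (_ : Ordinal hk = idx1) //; apply: val_inj.
Qed.

Lemma dotpE u v : dotp u v = u 0 0 * v 0 0 + u 0 idx1 * v 0 idx1.
Proof.
rewrite /dotp !big_ord_recr big_ord0 /= add0r.
by rewrite (_ : widen_ord _ _ = 0) //; apply: val_inj.
Qed.

Lemma dotpC u v : dotp u v = dotp v u.
Proof. by rewrite !dotpE mulrC [u 0 idx1 * _]mulrC. Qed.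

Lemma dotpDl u v w : dotp (u + v) w = dotp u w + dotp v w.
Proof. by rewrite !dotpE !mxE !mulrDl addrACA. Qed.

Lemma dotpZl a u v : dotp (a *: u) v = a * dotp u v.
Proof. by rewrite !dotpE !mxE mulrDr !mulrA. Qed.

Lemma dotpNl u v : dotp (- u) v = - dotp u v.
Proof. by rewrite -scaleN1r dotpZl mulN1r. Qed.

Lemma dotpDr u v w : dotp w (u + v) = dotp w u + dotp w v.
Proof. by rewrite dotpC dotpDl !(dotpC w). Qed.

Lemma dotpZr a u v : dotp v (a *: u) = a * dotp v u.
Proof. by rewrite dotpC dotpZl dotpC. Qed.

Lemma dotpNr u v : dotp v (- u) = - dotp v u.
Proof. by rewrite dotpC dotpNl dotpC. Qed.

Lemma dotpBr u v w : dotp w (u - v) = dotp w u - dotp w v.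
Proof. by rewrite dotpDr dotpNr. Qed.

Lemma dotp0l u : dotp 0 u = 0.
Proof. by rewrite -(scale0r 0) dotpZl mul0r. Qed.

Lemma dotp0r u : dotp u 0 = 0.
Proof. by rewrite dotpC dotp0l. Qed.

Lemma dotp_suml (I : finType) (F : I -> 'rV[R]_2) u :
  dotp (\sum_i F i) u = \sum_i dotp (F i) u.
Proof. by elim/big_rec2: _ => [|i x y _ <-]; rewrite ?dotp0l ?dotpDl. Qed.

Lemma dotp_sumr (I : finType) (F : I -> 'rV[R]_2) u :
  dotp u (\sum_i F i) = \sum_i dotp u (F i).
Proof. by rewrite dotpC dotp_suml; apply: eq_bigr => i _; rewrite dotpC. Qed.

Lemma dotp_ge0 u : 0 <= dotp u u.
Proof. by rewrite dotpE addr_ge0 // -expr2 sqr_ge0. Qed.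

Lemma dotp_eq0 u : dotp u u = 0 -> u = 0.
Proof.
move/eqP; rewrite dotpE paddr_eq0 -?expr2 ?sqr_ge0 // !sqrf_eq0.
by case/andP=> /eqP u0 /eqP u1; apply: row2P; rewrite mxE.
Qed.

Definition rot90 u : 'rV[R]_2 :=
  \row_(k < 2) (if k == 0 then - u 0 idx1 else u 0 0).

Lemma rot90E0 u : rot90 u 0 0 = - u 0 idx1. Proof. by rewrite mxE. Qed.
Lemma rot90E1 u : rot90 u 0 idx1 = u 0 0. Proof. by rewrite mxE. Qed.

Lemma rot90B u v : rot90 (u - v) = rot90 u - rot90 v.
Proof. by apply: row2P; rewrite !mxE /= ?opprD. Qed.

Lemma rot90_eq0 u : (rot90 u == 0) = (u == 0).
Proof.
apply/eqP/eqP => [h|->]; last by apply: row2P; rewrite !mxE ?oppr0.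
apply: row2P; rewrite mxE.
  by have := congr1 (fun w => w 0 idx1) h; rewrite rot90E1 mxE.
by have /eqP := congr1 (fun w => w 0 0) h; rewrite rot90E0 mxE oppr_eq0 => /eqP.
Qed.

Lemma rot90_0 : rot90 0 = 0.
Proof. by apply/eqP; rewrite rot90_eq0. Qed.

Lemma dotp_rot90 u : dotp u (rot90 u) = 0.
Proof. by rewrite dotpE rot90E0 rot90E1 mulrN mulrC addNr. Qed.

Lemma dotp_rot90C u v : dotp u (rot90 v) = - dotp v (rot90 u).
Proof. by rewrite !dotpE !rot90E0 !rot90E1 !mulrN opprD opprK addrC mulrC [_ * u 0 0]mulrC. Qed.

Lemma orth_rot90 u v : u != 0 -> dotp v u = 0 -> exists a, v = a *: rot90 u.
Proof.
move=> nu; rewrite dotpE => h.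
have [u0|u0] := eqVneq (u 0 0) 0.
  have u1 : u 0 idx1 != 0.
    by apply: contraNneq nu => u1; apply/eqP/row2P; rewrite ?u0 ?u1 mxE.
  move: h; rewrite u0 mulr0 add0r => /eqP; rewrite mulf_eq0 (negbTE u1) orbF.
  move=> /eqP v1; exists (- (v 0 0 / u 0 idx1)).
  by apply: row2P; rewrite !mxE /= ?mulrNN ?divfK // u0 mulr0 v1.
exists (v 0 idx1 / u 0 0); apply: row2P; rewrite !mxE /=; last by rewrite divfK.
apply: (mulfI u0); rewrite !mulrN mulrA [u 0 0 * (_ / _)]mulrC divfK //.
by rewrite [u 0 0 * _]mulrC; apply/eqP; rewrite -addr_eq0 h.
Qed.

Lemma orth_collinear u v w : u != 0 -> v != 0 ->
  dotp v u = 0 -> dotp w u = 0 -> exists m, w = m *: v.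
Proof.
move=> nu nv /(orth_rot90 nu)[a ea] /(orth_rot90 nu)[b eb].
have na : a != 0 by apply: contraNneq nv => a0; rewrite ea a0 scale0r.
by exists (b / a); rewrite ea eb scalerA divfK.
Qed.

(* Cramer's rule in the plane: two prescribed dot products with linearly
   independent vectors u, w can be realised simultaneously. *)
Lemma solve_dotp2 u w al be : dotp w (rot90 u) != 0 ->
  exists x, dotp u x = al /\ dotp w x = be.
Proof.
set d := dotp w (rot90 u) => nd.
exists ((- (al / d)) *: rot90 w + (be / d) *: rot90 u).
rewrite !dotpDr !dotpZr !dotp_rot90 !mulr0 addr0 add0r divfK //.
by rewrite dotp_rot90C -/d mulrN mulNr opprK divfK.
Qed.

End PlaneGeometry.

Section GramKernel.
Variables (R : realFieldType) (S T : finType).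
Local Notation W := {ffun S -> 'rV[R]_2}.

Definition pairing (u w : W) : R := \sum_s dotp (u s) (w s).

Lemma pairing_eq0 u : pairing u u = 0 -> u = 0.
Proof.
move=> h; apply/ffunP => s; rewrite ffunE; apply: dotp_eq0.
by apply: (psumr_eq0P _ h) => // i _; apply: dotp_ge0.
Qed.

Variable r : T -> W.

Definition eval_rows (w : W) : {ffun T -> R^o} := [ffun t => pairing (r t) w].
Definition comb_rows (l : {ffun T -> R^o}) : W := \sum_t l t *: r t.

Lemma eval_rows_lin : linear eval_rows.
Proof.
move=> a u v; apply/ffunP => t; rewrite !ffunE /pairing.
rewrite scaler_sumr -big_split; apply: eq_bigr => s _ /=.
by rewrite !ffunE dotpDr dotpZr.
Qed.
HB.instance Definition _ := GRing.isLinear.Build _ _ _ _ eval_rows eval_rows_lin.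

Lemma comb_rows_lin : linear comb_rows.
Proof.
move=> a u v; rewrite /comb_rows scaler_sumr -big_split; apply: eq_bigr => t _ /=.
by rewrite !ffunE scalerDl scalerA.
Qed.
HB.instance Definition _ := GRing.isLinear.Build _ _ _ _ comb_rows comb_rows_lin.

Lemma pairing_comb l w : pairing (comb_rows l) w = \sum_t l t * pairing (r t) w.
Proof.
rewrite /pairing /comb_rows; under eq_bigr => s _ do rewrite sum_ffunE dotp_suml.
rewrite exchange_big; apply: eq_bigr => t _; rewrite mulr_sumr.
by apply: eq_bigr => s _; rewrite ffunE dotpZl.
Qed.

Hypothesis r_free : forall lam : T -> R, \sum_t lam t *: r t = 0 -> forall t, lam t = 0.

(* Gram argument: eval_rows \o comb_rows is injective, so eval_rows is onto. *)
Lemma eval_rows_onto : (linfun eval_rows @: fullv)%VS = fullv :> {vspace {ffun T -> R^o}}.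
Proof.
pose g := (linfun eval_rows \o linfun comb_rows)%VF.
have g_inj : lker g == 0%VS.
  apply/eqP/vspaceP => l; rewrite memv_ker memv0 comp_lfunE !lfunE /=.
  apply/idP/idP => [/eqP gl|/eqP ->]; last by rewrite !linear0.
  have c0 : comb_rows l = 0.
    apply: pairing_eq0; rewrite pairing_comb big1 // => t _.
    by move/ffunP: gl => /(_ t); rewrite !ffunE => ->; rewrite mulr0.
  apply/eqP/ffunP => t; rewrite ffunE; exact: r_free c0 t.
apply/eqP; rewrite eqEdim subvf /=.
have g0 : (fullv :&: lker g = 0)%VS by rewrite capfv; apply/eqP.
rewrite -(limg_dim_eq g0); apply: dimvS; apply/subvP => x /memv_imgP [l _ ->].
by rewrite comp_lfunE memv_img ?memvf.
Qed.

Lemma gram_kernel_dim : (\dim (lker (linfun eval_rows)) + #|T| = #|S| * 2)%N.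
Proof.
have := limg_ker_dim (linfun eval_rows) fullv.
rewrite capfv eval_rows_onto !dimvf /dim /= muln1 => ->.
by have := dim_matrix R 1 2; rewrite /dim /= => ->.
Qed.

End GramKernel.

Definition strain (R : realFieldType) (V : finType) (p q : V -> 'rV[R]_2) (x y : V) : R :=
  dotp (p x - p y) (q x - q y).
Definition resultant (R : realFieldType) (V : finType) (p : V -> 'rV[R]_2)
    (lam : V -> V -> R) (i : V) : 'rV[R]_2 :=
  \sum_j lam i j *: (p i - p j).

Definition edgeset (V : finType) (E : rel V) : {set {set V}} :=
  [set e : {set V} | [exists x, exists y, E x y && (e == [set x; y])]].

Section RigidityMap.
Variables (R : realFieldType) (V : finType) (H : pgraph V) (p : V -> 'rV[R]_2).
Local Notation I := (inner H).
Local Notation E := (edge H).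
Local Notation S := {v : V | v \in inner H}.
Local Notation ES := {e : {set V} | e \in edgeset (edge H)}.

Hypothesis symE : forall x y, E x y = E y x.
Hypothesis irrE : forall x, ~~ E x x.

Lemma edge_neq x y : E x y -> x != y.
Proof. by apply: contraTneq => ->. Qed.

Lemma mem_edgeset_pair i j : i != j -> ([set i; j] \in edgeset E) = E i j.
Proof.
move=> nij; rewrite inE; apply/existsP/idP => [[x /existsP[y /andP[exy /eqP e]]]|eij].
  have ix : i \in [set x; y] by rewrite -e !inE eqxx.
  have jx : j \in [set x; y] by rewrite -e !inE eqxx orbT.
  by move: ix jx nij; rewrite !inE => /orP[]/eqP -> /orP[]/eqP ->; rewrite ?eqxx // symE.
by exists i; apply/existsP; exists j; rewrite eij eqxx.
Qed.

Lemma edgesetP (e : ES) : exists x y, E x y /\ val e = [set x; y].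
Proof.
by have := valP e; rewrite inE => /existsP[x /existsP[y /andP[exy /eqP ee]]]; exists x, y.
Qed.

Lemma edgeset_pair (e : {set V}) i j : e \in edgeset E -> i \in e -> j \in e -> i != j ->
  e = [set i; j].
Proof.
rewrite inE => /existsP[x /existsP[y /andP[_ /eqP ->]]].
by rewrite !inE => /orP[]/eqP -> /orP[]/eqP ->; rewrite ?eqxx // setUC.
Qed.

(* The row of the rigidity matrix indexed by the edge e = {x, y}: it is
   p x - p y at x, p y - p x at y (when inner), and 0 elsewhere. *)
Definition rigidity_row (e : ES) : {ffun S -> 'rV[R]_2} :=
  [ffun s => if val s \in val e then \sum_(w in val e) (p (val s) - p w) else 0].

Definition restrict (q : V -> 'rV[R]_2) : {ffun S -> 'rV[R]_2} := [ffun s => q (val s)].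
Definition extend (w : {ffun S -> 'rV[R]_2}) : V -> 'rV[R]_2 :=
  fun v => if insub v is Some s then w s else 0.

Lemma restrictK w : restrict (extend w) = w.
Proof. by apply/ffunP => s; rewrite ffunE /extend valK. Qed.

Lemma extend_out w v : v \notin I -> extend w v = 0.
Proof. by move=> vI; rewrite /extend insubF //; apply/negbTE. Qed.

Lemma sum_pair (M : zmodType) x y (F : V -> M) : x != y ->
  \sum_(v in [set x; y]) F v = F x + F y.
Proof. by move=> nxy; rewrite big_setU1 ?big_set1 // in_set1. Qed.

Lemma pairing_row (e : ES) x y q : val e = [set x; y] -> x != y ->
  (forall v, v \notin I -> q v = 0) ->
  pairing (rigidity_row e) (restrict q) = strain p q x y.
Proof.
move=> ee nxy q0.
pose G v := dotp (if v \in val e then \sum_(w in val e) (p v - p w) else 0) (q v).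
have GI : forall v, v \notin I -> G v = 0 by move=> v /q0 qv; rewrite /G qv dotp0r.
transitivity (\sum_v G v).
  rewrite /pairing (bigID (fun v => v \in I)) /= [X in _ + X]big1 ?addr0; last by move=> v /GI.
  rewrite (reindex_omap (val : S -> V) insub) => [|v vi]; last by rewrite insubT.
  by apply: congr_big => // [s|s _]; rewrite ?(valP s) ?valK ?eqxx // !ffunE.
rewrite (bigID (mem (val e))) /= [X in _ + X]big1 ?addr0; last first.
  by move=> v /negbTE ve; rewrite /G ve dotp0l.
rewrite ee !sum_pair // /G ee !inE !eqxx ?orbT !sum_pair // !subrr add0r addr0.
by rewrite /strain dotpBr -[p y - p x]opprB dotpNl.
Qed.

Definition edge_stress (lam : ES -> R) (x y : V) : R :=
  if E x y then (if insub [set x; y] is Some e then lam e else 0) else 0.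

Lemma sum_select (M : zmodType) (F : ES -> M) (A : {set V}) :
  \sum_(e : ES) (if val e == A then F e else 0) =
  (if insub A is Some e0 then F e0 else 0).
Proof.
case: insubP => [e0 _ <-|hn].
  by rewrite (bigD1 e0) //= eqxx big1 ?addr0 // => e ne; rewrite val_eqE (negbTE ne).
by apply: big1 => e _; case: eqP => // ea; move: hn; rewrite -ea (valP e).
Qed.

Lemma comb_rigidity_rows (lam : ES -> R) (s : S) :
  (\sum_e lam e *: rigidity_row e) s = resultant p (edge_stress lam) (val s).
Proof.
set i := val s; rewrite sum_ffunE /resultant.
transitivity (\sum_(e : ES) \sum_j
    (if (i \in val e) && (j \in val e) then lam e *: (p i - p j) else 0)).
  apply: eq_bigr => e _; rewrite !ffunE; case: ifP => ie /=; last by rewrite scaler0 big1.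
  rewrite scaler_sumr [LHS]big_mkcond /=.
  by apply: eq_bigr => j _; case: ifP.
rewrite exchange_big /=; apply: eq_bigr => j _.
have [<-|nij] := eqVneq i j.
  by rewrite subrr scaler0 big1 // => e _; rewrite scaler0; case: ifP.
transitivity (\sum_(e : ES) (if val e == [set i; j] then lam e *: (p i - p j) else 0)).
  apply: eq_bigr => e _; case: eqP => [->|ne]; first by rewrite !inE !eqxx orbT.
  by case: ifP => // /andP[ie je]; case: ne; exact: edgeset_pair (valP e) ie je nij.
rewrite sum_select /edge_stress -mem_edgeset_pair //.
by case: insubP => [e0 -> _|/negbTE ->]; rewrite ?scale0r.
Qed.

Lemma rigidity_rows_free : independent H p ->
  forall lam : ES -> R, \sum_e lam e *: rigidity_row e = 0 -> forall e, lam e = 0.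
Proof.
move=> ind lam hsum.
have st : self_stress H p (edge_stress lam).
  split=> [x y|x y /negbTE nxy|i hi]; first by rewrite /edge_stress symE setUC.
    by rewrite /edge_stress nxy.
  have h := comb_rigidity_rows lam (exist _ i hi); rewrite hsum ffunE in h.
  exact: (esym h).
move=> e; have [x [y [exy ee]]] := edgesetP e.
by have := ind _ st x y; rewrite /edge_stress exy -ee valK.
Qed.

Definition rigidity_map := linfun (eval_rows rigidity_row).

Lemma motion_in_kernel q : motion H p q -> restrict q \in lker rigidity_map.
Proof.
move=> [q0 qe]; rewrite memv_ker lfunE /=; apply/eqP/ffunP => e; rewrite !ffunE.
have [x [y [exy ee]]] := edgesetP e.
by rewrite (pairing_row ee) ?edge_neq //; apply: qe.
Qed.

Lemma kernel_motion w : w \in lker rigidity_map -> motion H p (extend w).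
Proof.
rewrite memv_ker lfunE /= => /eqP/ffunP hw; split=> [|x y exy]; first exact: extend_out.
have mem : [set x; y] \in edgeset E by rewrite mem_edgeset_pair ?edge_neq.
pose e : ES := exist _ [set x; y] mem.
have := hw e; rewrite !ffunE -{1}(restrictK w).
by rewrite (@pairing_row e x y) ?edge_neq //; apply: extend_out.
Qed.

Lemma motion_dim_count : independent H p ->
  (\dim (lker rigidity_map) + ecount E = #|I| * 2)%N.
Proof.
move=> ind; rewrite (_ : ecount E = #|{: ES}|); last by rewrite card_sig.
by rewrite (gram_kernel_dim (rigidity_rows_free ind)) card_sig.
Qed.

Lemma isostatic_ecount : isostatic H p -> ecount E = (2 * #|I|)%N.
Proof.
move=> [ind mot]; rewrite mulnC -(motion_dim_count ind).
suff -> : lker rigidity_map = 0%VS by rewrite dimv0.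
apply/vspaceP => w; rewrite memv0; apply/idP/idP => [wk|/eqP ->]; last exact: mem0v.
apply/eqP/ffunP => s; rewrite -(restrictK w) !ffunE.
by rewrite (mot _ (kernel_motion wk)).
Qed.

Lemma free_motions_count (X : seq {ffun S -> 'rV[R]_2}) : independent H p ->
  free X -> {subset X <= lker rigidity_map} -> (size X + ecount E <= #|I| * 2)%N.
Proof.
move=> ind /eqP <- sX; rewrite -(motion_dim_count ind) leq_add2r.
by apply: dimvS; apply/span_subvP.
Qed.
End RigidityMap.

Section MaxwellCounts.
Variables (R : realFieldType) (V : finType).
Implicit Types (H : pgraph V) (p : V -> 'rV[R]_2) (I : {set V}).

(* In an independent framework the two ends of a bar are at distinct
   positions: otherwise a unit stress on that single bar is a self-stress. *)
Lemma independent_bar_apart H p x y :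
  (forall u v, edge H u v = edge H v u) -> independent H p ->
  edge H x y -> x != y -> p x != p y.
Proof.
move=> symE ind exy nxy; apply/negP => /eqP pe.
pose L u v : R := if (u == x) && (v == y) || (u == y) && (v == x) then 1 else 0.
have st : self_stress H p L.
  split=> [u v|u v|i _]; rewrite /L.
  - by rewrite orbC andbC [(_ == y) && _]andbC.
  - by case: ifP => // /orP[]/andP[/eqP-> /eqP->]; rewrite ?exy // symE exy.
  apply: big1 => j _.
  by case: ifP => [/orP[]/andP[/eqP-> /eqP->]|_]; rewrite ?pe ?subrr ?scaler0 ?scale0r.
by have /eqP := ind L st x y; rewrite /L !eqxx oner_eq0.
Qed.

Definition rotation I p c (v : V) : 'rV[R]_2 :=
  if v \in I then rot90 (p v - p c) else 0.
Definition translation I (t : 'rV[R]_2) (v : V) : 'rV[R]_2 :=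
  if v \in I then t else 0.

Lemma rotation_diff I p c u v : c \notin I -> u \in c |: I -> v \in c |: I ->
  rotation I p c u - rotation I p c v = rot90 (p u - p v).
Proof.
move=> cI; rewrite /rotation !inE => /orP[/eqP->|uI] /orP[/eqP->|vI];
  rewrite ?(negbTE cI) ?uI ?vI ?subrr ?subr0 ?sub0r ?rot90B //.
- by rewrite rot90_0.
- by rewrite opprB.
- by rewrite opprB addrA subrK.
Qed.

Lemma rotation_motion H p z : z \notin inner H ->
  (forall x y, edge H x y -> (x \in z |: inner H) && (y \in z |: inner H)) ->
  motion H p (rotation (inner H) p z).
Proof.
move=> zI dom; split=> [v vI|x y /dom /andP[xI yI]]; first by rewrite /rotation (negbTE vI).
by rewrite rotation_diff // dotp_rot90.
Qed.

Lemma translation_motion H p t :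
  (forall x y, edge H x y -> (x \in inner H) && (y \in inner H)) ->
  motion H p (translation (inner H) t).
Proof.
move=> dom; split=> [v vI|x y /dom /andP[xI yI]]; first by rewrite /translation (negbTE vI).
by rewrite /translation xI yI subrr dotp0r.
Qed.

Lemma inner_rotation_motion H p c :
  (forall x y, edge H x y -> (x \in inner H) && (y \in inner H)) ->
  motion H p (rotation (inner H) p c).
Proof.
move=> dom; split=> [v vI|x y /dom /andP[xI yI]]; first by rewrite /rotation (negbTE vI).
by rewrite /rotation xI yI -rot90B opprB addrA subrK dotp_rot90.
Qed.

Section SubframeworkCounts.
Variables (H : pgraph V) (p : V -> 'rV[R]_2).
Hypotheses (symE : forall x y, edge H x y = edge H y x) (irrE : forall x, ~~ edge H x x).
Hypothesis ind : independent H p.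
Local Notation I := (inner H).

(* With a single pinned vertex z, the rotation about z is a non-trivial
   motion, so |E| <= 2|I| - 1. *)
Lemma count_one_pin z x0 y0 : z \notin I ->
  (forall x y, edge H x y -> (x \in z |: I) && (y \in z |: I)) -> edge H x0 y0 ->
  (ecount (edge H) + 1 <= 2 * #|I|)%N.
Proof.
move=> zI dom e0.
have apart : p x0 != p y0 := independent_bar_apart symE ind e0 (edge_neq irrE e0).
have inI w : w \in z |: I -> p w != p z -> w \in I.
  by rewrite !inE => /orP[/eqP->|//]; rewrite eqxx.
have [v [vI pv]] : exists v, v \in I /\ p v != p z.
  have /andP[xI yI] := dom _ _ e0.
  have [ex|nx] := eqVneq (p x0) (p z); last by exists x0; rewrite inI.
  have py : p y0 != p z by rewrite -ex eq_sym.
  by exists y0; rewrite inI.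
have fr : free [:: restrict H (rotation I p z)].
  rewrite seq1_free; apply/eqP => /ffunP /(_ (exist _ v vI)).
  by rewrite !ffunE /rotation vI => /eqP; rewrite rot90_eq0 subr_eq0 (negbTE pv).
have sub : {subset [:: restrict H (rotation I p z)] <= lker (rigidity_map H p)}.
  by move=> w; rewrite inE => /eqP ->; apply/(motion_in_kernel irrE)/rotation_motion.
by have := free_motions_count symE ind fr sub; rewrite mulnC addnC.
Qed.

(* Without pinned vertices, two translations and a rotation are independent
   motions, so |E| <= 2|I| - 3. *)
Lemma count_no_pin x0 y0 :
  (forall x y, edge H x y -> (x \in I) && (y \in I)) -> edge H x0 y0 ->
  (ecount (edge H) + 3 <= 2 * #|I|)%N.
Proof.
move=> dom e0; have /andP[x0I y0I] := dom _ _ e0.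
have apart : p x0 != p y0 := independent_bar_apart symE ind e0 (edge_neq irrE e0).
pose T (k : 'I_2) := restrict H (translation I (delta_mx 0 k)).
pose X := [tuple T 0; T idx1; restrict H (rotation I p x0)].
have fr : free X.
  apply/freeP => k hk.
  have at_v v (vI : v \in I) : k 0 *: delta_mx 0 0 + k 1 *: delta_mx 0 idx1
      + k 2 *: rotation I p x0 v = 0 :> 'rV[R]_2.
    move/ffunP: hk => /(_ (exist _ v vI)).
    rewrite !big_ord_recr big_ord0 /= add0r !ffunE /translation vI; apply: etrans.
    by congr (k _ *: _ + k _ *: _ + k _ *: _); apply: val_inj.
  have k01 : k 0 = 0 /\ k 1 = 0.
    have := at_v _ x0I; rewrite /rotation x0I subrr rot90_0 scaler0 addr0.
    move=> /rowP h; have := h 0; have := h idx1; rewrite !mxE /=.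
    by rewrite !mulr1 !mulr0 add0r addr0 => -> ->.
  have k2 : k 2 = 0.
    have /eqP := at_v _ y0I; rewrite k01.1 k01.2 !scale0r !add0r /rotation y0I.
    by rewrite scaler_eq0 rot90_eq0 subr_eq0 [p y0 == _]eq_sym (negbTE apart) orbF => /eqP.
  case=> -[|[|[|i]]] hi //; [rewrite -k01.1 | rewrite -k01.2 | rewrite -k2];
    by congr k; apply: val_inj.
have sub : {subset X <= lker (rigidity_map H p)}.
  move=> w; rewrite !inE => /or3P[] /eqP ->; apply: (motion_in_kernel irrE).
  - exact: translation_motion.
  - exact: translation_motion.
  exact: inner_rotation_motion.
by have := free_motions_count symE ind fr sub; rewrite size_tuple mulnC addnC.
Qed.

End SubframeworkCounts.

(* A subframework of an independent framework is independent: a self-stress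
   of the part extends by zero. *)
Lemma subframework_independent H p I' P' E' :
  [disjoint inner H & pinned H] -> independent H p -> subgraph H I' P' E' ->
  independent (PGraph I' P' E') p.
Proof.
move=> dis ind [sI sP sub _ dom] lam [ls lsup leq]; apply: ind; split=> // [x y nxy|i iH].
  by apply: lsup; apply: contra nxy; exact: sub.
have [iI|niI] := boolP (i \in I'); first exact: leq.
apply: big1 => j _; have [eij|/lsup -> ] := boolP (E' i j); last by rewrite scale0r.
move: (dom _ _ eij); rewrite !inE (negbTE niI) /= => /andP[iP _].
by move: (disjointFl dis (subsetP sP i iP)); rewrite iH.
Qed.

Lemma isostatic_pinned_isostatic_graph H p :
  [disjoint inner H & pinned H] ->
  (forall x y, edge H x y = edge H y x) -> (forall x, ~~ edge H x x) ->
  isostatic H p -> pinned_isostatic_graph H.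
Proof.
move=> dis symE irrE iso; split; first exact: isostatic_ecount symE irrE iso.
move=> I' P' E' hsub [x0 [y0 e0]]; have [sI sP sub symE' dom] := hsub.
pose H' := PGraph I' P' E'.
have symH' : forall x y, edge H' x y = edge H' y x := symE'.
have irrH' x : ~~ edge H' x x by apply/negP => /sub; apply/negP.
have ind : independent H' p := subframework_independent dis iso.1 hsub.
have PnI v : v \in P' -> v \notin I'.
  by move=> vP; apply: contraL (subsetP sP v vP) => /(subsetP sI) vI; rewrite (disjointFr dis vI).
split.
- move=> _; have := motion_dim_count symH' ind.
  by rewrite mulnC => <-; apply: leq_addl.
- move=> /eqP/cards1P [z ez]; apply: (count_one_pin symH' irrH' ind (z := z) _ _ e0).
    by apply: PnI; rewrite ez set11.
  by move=> x y /dom /and3P[+ + _]; rewrite ez ![I' :|: _]setUC => -> ->.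
- move=> /eqP; rewrite cards_eq0 => /eqP P0; apply: (count_no_pin symH' irrH' ind _ e0).
  by move=> x y /dom /and3P[+ + _]; rewrite P0 setU0 => -> ->.
Qed.
End MaxwellCounts.

Section AddEdge.
Variable V : finType.

Lemma add_edge_mono (E E' : rel V) a c x y : (forall u v, E' u v -> E u v) ->
  add_edge E' a c x y -> add_edge E a c x y.
Proof. by move=> sub; rewrite /add_edge => /orP[/orP[/sub->|->]|->]; rewrite ?orbT. Qed.

Lemma add_edge_sym (E : rel V) a c : (forall x y, E x y = E y x) ->
  forall x y, add_edge E a c x y = add_edge E a c y x.
Proof.
move=> symE x y; rewrite /add_edge symE.
by case: (y == a); case: (y == c); case: (x == a); case: (x == c); rewrite /= ?orbT ?orbF.
Qed.

Lemma add_edge_irr (E : rel V) a c : (forall x, ~~ E x x) -> a != c ->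
  forall x, ~~ add_edge E a c x x.
Proof.
move=> irrE nac x; rewrite /add_edge (negbTE (irrE x)) /=.
by apply/norP; split; apply/andP => -[/eqP xa /eqP xc]; move: nac; rewrite -xa -xc eqxx.
Qed.

End AddEdge.

Section Linkage.
Variables (R : realFieldType) (V : finType).
Implicit Types (G : pgraph V) (p q m : V -> 'rV[R]_2) (lam : V -> V -> R).

Lemma strainC p q x y : strain p q x y = strain p q y x.
Proof. by rewrite /strain -[p x - p y]opprB dotpNl -[q x - q y]opprB dotpNr opprK. Qed.

Lemma strain_scale p q q0 c x y : (forall v, q v = c *: q0 v) ->
  strain p q x y = c * strain p q0 x y.
Proof. by move=> h; rewrite /strain !h -scalerBr dotpZr. Qed.

Lemma virtual_work p q lam : (forall x y, lam x y = lam y x) ->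
  \sum_i \sum_j lam i j * strain p q i j = (\sum_i dotp (q i) (resultant p lam i)) *+ 2.
Proof.
move=> ls.
have work_i : \sum_i \sum_j lam i j * dotp (p i - p j) (q i) =
              \sum_i dotp (q i) (resultant p lam i).
  apply: eq_bigr => i _; rewrite dotp_sumr; apply: eq_bigr => j _.
  by rewrite dotpZr dotpC.
have work_j : \sum_i \sum_j lam i j * dotp (p i - p j) (q j) =
              - \sum_i \sum_j lam i j * dotp (p i - p j) (q i).
  rewrite exchange_big -sumrN; apply: eq_bigr => j _; rewrite -sumrN.
  by apply: eq_bigr => i _; rewrite ls -[p i - p j]opprB dotpNl mulrN.
rewrite mulr2n -work_i -[X in _ + X]opprK -work_j -sumrB; apply: eq_bigr => i _.
by rewrite -sumrB; apply: eq_bigr => j _; rewrite /strain dotpBr mulrBr.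
Qed.

Lemma sum_two_pairs (F : V -> V -> R) a c : a != c ->
  (forall i j, ~~ ((i == a) && (j == c) || (i == c) && (j == a)) -> F i j = 0) ->
  \sum_i \sum_j F i j = F a c + F c a.
Proof.
move=> nac h.
have Fa : \sum_j F a j = F a c.
  rewrite (bigD1 c) //= big1 ?addr0 // => j njc; apply: h.
  by rewrite eqxx (negbTE njc) /= (negbTE nac).
have Fc : \sum_j F c j = F c a.
  rewrite (bigD1 a) //= big1 ?addr0 // => j nja; apply: h.
  by rewrite eqxx (negbTE nja) andbF eq_sym (negbTE nac).
rewrite (bigD1 a) //= Fa (bigD1 c) 1?eq_sym //= Fc big1 ?addr0 // => i /andP[nic nia].
by apply: big1 => j _; apply: h; rewrite (negbTE nia) (negbTE nic).
Qed.

Lemma linkage_motion_zero G p q m a c : indep_1dof G p ->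
  motion G p q -> strain p q a c != 0 ->
  motion G p m -> strain p m a c = 0 -> forall v, m v = 0.
Proof.
move=> [_ [q0 [_ _ span]]] mq sq mm sm.
have [k hk] := span m mm; have [cq hq] := span q mq.
move: sm sq; rewrite (strain_scale _ _ _ hk) (strain_scale _ _ _ hq).
move=> /eqP; rewrite mulf_eq0 => /orP[/eqP k0 _|/eqP -> ]; last by rewrite mulr0 eqxx.
by move=> v; rewrite hk k0 scale0r.
Qed.

(* Adding a bar ac that is strained by a motion q of an independent framework
   creates no self-stress: by virtual work the new bar carries no force. *)
Lemma added_bar_no_stress G p q lam a c :
  (forall x y, edge G x y = edge G y x) -> independent G p ->
  motion G p q -> strain p q a c != 0 -> a != c ->
  (forall x y, lam x y = lam y x) ->
  (forall x y, ~~ add_edge (edge G) a c x y -> lam x y = 0) ->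
  (forall i, i \in inner G -> resultant p lam i = 0) ->
  forall x y, lam x y = 0.
Proof.
move=> symE ind [qz qe] sq nac ls lsup leq.
have work0 : \sum_i \sum_j lam i j * strain p q i j = 0.
  rewrite virtual_work // big1 ?mul0rn // => i _.
  by have [/leq ->|/qz ->] := boolP (i \in inner G); rewrite ?dotp0r ?dotp0l.
have lac : lam a c = 0.
  move: work0; rewrite (sum_two_pairs nac) => [|i j nij]; last first.
    have [eij|neij] := boolP (edge G i j); first by rewrite /strain qe // mulr0.
    by rewrite lsup ?mul0r // /add_edge (negbTE neij).
  rewrite (ls c a) (strainC p q c a) -mulr2n => /eqP.
  by rewrite mulrn_eq0 /= mulf_eq0 (negbTE sq) orbF => /eqP.
apply: ind; split=> // x y nxy; have [|/lsup] := boolP (add_edge (edge G) a c x y) => //.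
by rewrite /add_edge (negbTE nxy) /= => /orP[]/andP[/eqP-> /eqP->] //; rewrite ls.
Qed.

Lemma add_bar_isostatic G p a c :
  (forall x y, edge G x y = edge G y x) -> indep_1dof G p -> a != c ->
  (exists q, motion G p q /\ strain p q a c != 0) ->
  isostatic (PGraph (inner G) (pinned G) (add_edge (edge G) a c)) p.
Proof.
move=> symE lk nac [q [mq sq]]; split.
  move=> lam [ls lsup leq].
  exact: (added_bar_no_stress symE lk.1 mq sq nac ls lsup leq).
move=> m [mz me]; apply: (linkage_motion_zero lk mq sq).
  by split=> // x y exy; apply: me; rewrite /= /add_edge exy.
by apply: me; rewrite /= /add_edge !eqxx orbT.
Qed.

Section DegreeTwo.
Variables (G : pgraph V) (p : V -> 'rV[R]_2) (a b c : V).
Hypotheses (symE : forall x y, edge G x y = edge G y x) (irrE : forall x, ~~ edge G x x).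
Hypotheses (lk : indep_1dof G p) (ab : edge G a b) (bc : edge G b c) (nac : a != c).
Hypotheses (bI : b \in inner G) (deg_b : deg G b = 2%N).

Local Notation Gb := (PGraph (inner G :\ b) (pinned G)
  (add_edge (fun x y => [&& edge G x y, x != b & y != b]) a c)).

Let nab : a != b := edge_neq irrE ab.
Let ncb : c != b := contra_neq esym (edge_neq irrE bc).

Lemma deg2_neighbours y : edge G b y -> (y == a) || (y == c).
Proof.
move=> eby; apply/negPn/negP => /norP[nya nyc].
have sub : y |: [set a; c] \subset [set x | edge G b x].
  by apply/subsetP => x; rewrite !inE => /or3P[]/eqP->; rewrite // symE.
have := subset_leq_card sub; rewrite -/(deg G b) deg_b cardsU1 cards2 nac !inE.
by rewrite (negbTE nya) (negbTE nyc).
Qed.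

(* Since b only sees a and c, a velocity field is a motion as soon as it
   strains neither the bars avoiding b nor ba, bc. *)
Lemma deg2_motion m : (forall v, v \notin inner G -> m v = 0) ->
  (forall x y, edge G x y -> x != b -> y != b -> strain p m x y = 0) ->
  strain p m b a = 0 -> strain p m b c = 0 -> motion G p m.
Proof.
move=> mz mo sba sbc; split=> // x y exy; rewrite -/(strain p m x y).
have at_b z : edge G b z -> strain p m b z = 0.
  by move=> /deg2_neighbours /orP[]/eqP->.
have [xb|nxb] := eqVneq x b; first by rewrite xb at_b // -xb.
have [yb|nyb] := eqVneq y b; last exact: mo.
by rewrite strainC yb at_b // -yb symE.
Qed.

(* The bars ba and bc are not collinear: otherwise b could move alone,
   perpendicularly to both, and this motion would span all motions, although
   the active motion moves a or c. *)
Lemma deg2_bars_independent q : motion G p q -> strain p q a c != 0 ->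
  dotp (p b - p c) (rot90 (p b - p a)) != 0.
Proof.
move=> mq sq; apply/negP => /eqP D0.
have nu : p b - p a != 0.
  by rewrite subr_eq0 eq_sym (independent_bar_apart symE lk.1 ab nab).
pose mb v := if v == b then rot90 (p b - p a) else 0.
have mbz v : v != b -> mb v = 0 by rewrite /mb => /negbTE ->.
have mmb : motion G p mb.
  apply: deg2_motion.
  - by move=> v vI; apply: mbz; apply: contraNneq vI => ->.
  - by move=> x y _ /mbz mx /mbz my; rewrite /strain mx my subrr dotp0r.
  - by rewrite /strain (mbz _ nab) /mb eqxx subr0 dotp_rot90.
  by rewrite /strain (mbz _ ncb) /mb eqxx subr0 D0.
have [_ [q0 [_ _ span]]] := lk.
have [k hk] := span mb mmb; have [cq hq] := span q mq.
have k0 : k != 0.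
  by apply: contraNneq nu => k0; move: (hk b); rewrite /mb eqxx k0 scale0r => /eqP; rewrite rot90_eq0.
have q0_ac v : v != b -> q0 v = 0.
  by move=> /mbz; rewrite hk => /eqP; rewrite scaler_eq0 (negbTE k0) => /eqP.
by move: sq; rewrite /strain !hq !q0_ac ?nab ?ncb // scaler0 subrr dotp0r eqxx.
Qed.

(* A motion of Gb extends through b to a motion of G that does not strain ac:
   the velocity of b is determined by the two bars ba, bc. *)
Lemma deg2_extend_motion q m : motion G p q -> strain p q a c != 0 -> motion Gb p m ->
  exists m', [/\ motion G p m', strain p m' a c = 0 & forall v, v != b -> m' v = m v].
Proof.
move=> mq sq [mz me].
have [x [xa xc]] : exists x, dotp (p b - p a) x = dotp (p b - p a) (m a) /\
    dotp (p b - p c) x = dotp (p b - p c) (m c).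
  by apply: solve_dotp2; exact: deg2_bars_independent mq sq.
pose m' v := if v == b then x else m v.
have m'E v : v != b -> m' v = m v by rewrite /m' => /negbTE ->.
exists m'; split=> //; last first.
  by rewrite /strain (m'E _ nab) (m'E _ ncb); apply: me; rewrite /= /add_edge !eqxx orbT.
apply: deg2_motion.
- move=> v vI; rewrite m'E; last by apply: contraNneq vI => ->.
  by apply: mz; rewrite !inE (negbTE vI) andbF.
- move=> x' y exy nxb nyb; rewrite /strain !m'E //.
  by apply: me; rewrite /= /add_edge exy nxb nyb.
- by rewrite /strain (m'E _ nab) /m' eqxx dotpBr xa subrr.
by rewrite /strain (m'E _ ncb) /m' eqxx dotpBr xc subrr.
Qed.

(* Replacing the 2-valent vertex b by an actively driven bar ac yields an
   isostatic framework: motions of Gb extend to motions of G through b, and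
   stresses of Gb are stresses of G + ac. *)
Lemma deg2_isostatic q : motion G p q -> strain p q a c != 0 -> isostatic Gb p.
Proof.
move=> mq sq; split.
  move=> lam [ls lsup leq].
  have lb j : lam b j = 0.
    by apply: lsup; rewrite /add_edge /= eqxx andbF /= ![b == _]eq_sym (negbTE nab) (negbTE ncb).
  apply: (added_bar_no_stress symE lk.1 mq sq nac ls).
    move=> x y nxy; apply: lsup; apply: contra nxy.
    by apply: add_edge_mono => u v /and3P[].
  move=> i iI; have [->|nib] := eqVneq i b.
    by apply: big1 => j _; rewrite lb scale0r.
  by apply: leq; rewrite !inE nib.
move=> m mm; have [m' [m'G m'ac m'E]] := deg2_extend_motion mq sq mm.
have m'0 := linkage_motion_zero lk mq sq m'G m'ac.
move=> v; have [->|nvb] := eqVneq v b; last by rewrite -m'E.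
by case: mm => mz _; apply: mz; rewrite !inE eqxx.
Qed.

End DegreeTwo.

Section PinDriver.
Variables (G : pgraph V) (p : V -> 'rV[R]_2) (a pi pj : V).
Hypotheses (dis : [disjoint inner G & pinned G]) (symE : forall x y, edge G x y = edge G y x).
Hypotheses (lk : indep_1dof G p) (piP : pi \in pinned G) (pjP : pj \in pinned G).
Hypotheses (aI : a \in inner G) (api : edge G a pi).
Variable q : V -> 'rV[R]_2.
Hypotheses (mq : motion G p q) (sq : strain p q a pj != 0).

Local Notation Pa := (a |: pinned G).
Local Notation Ga := (PGraph (inner G :\ a) Pa
  (fun x y => edge G x y && ~~ ((x \in Pa) && (y \in Pa)))).

Lemma pinned_still v : v \in pinned G -> q v = 0.
Proof. by move=> vP; apply: mq.1; rewrite (disjointFl dis vP). Qed.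

Lemma napi : a != pi.
Proof. by apply: contraTneq aI => ->; rewrite (disjointFl dis piP). Qed.

(* The resultant at a of a stress of Ga is directed along the bar a pi: by
   virtual work it is orthogonal to the velocity of a, as is the bar a pi. *)
Lemma pin_resultant lam : self_stress Ga p lam ->
  exists mu, resultant p lam a = mu *: (p a - p pi).
Proof.
move=> [ls lsup leq].
have qa : q a != 0.
  by apply: contraNneq sq => qa0; rewrite /strain qa0 (pinned_still pjP) subrr dotp0r.
have work0 : \sum_i \sum_j lam i j * strain p q i j = 0.
  apply: big1 => i _; apply: big1 => j _; have [e|ne] := boolP (edge G i j).
    by rewrite /strain mq.2 // mulr0.
  by rewrite lsup ?mul0r //= (negbTE ne).
have work : dotp (q a) (resultant p lam a) *+ 2 = 0.
  rewrite -work0 virtual_work //; congr (_ *+ 2).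
  rewrite (bigD1 a) //= big1 ?addr0 // => i nia.
  have [iI|/mq.1 ->] := boolP (i \in inner G); last by rewrite dotp0l.
  by rewrite /resultant leq ?dotp0r // !inE nia.
have orth_bar : dotp (p a - p pi) (q a) = 0.
  by have := mq.2 _ _ api; rewrite (pinned_still piP) subr0.
have bar0 : p a - p pi != 0.
  by rewrite subr_eq0 (independent_bar_apart symE lk.1 api napi).
apply: (orth_collinear qa bar0 orth_bar).
by move/eqP: work; rewrite mulrn_eq0 /= dotpC => /eqP.
Qed.

(* Pinning a kills every self-stress: the resultant at a can be absorbed by
   the bar a pi, giving a self-stress of G. *)
Lemma pin_stress_free lam : self_stress Ga p lam -> forall x y, lam x y = 0.
Proof.
move=> st; have [mu hmu] := pin_resultant st; have [ls lsup leq] := st.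
pose onbar x y := (x == a) && (y == pi) || (x == pi) && (y == a).
pose L x y := lam x y - (if onbar x y then mu else 0).
have onbarC x y : onbar x y = onbar y x by rewrite /onbar orbC andbC [(y == pi) && _]andbC.
have stG : self_stress G p L.
  split=> [x y|x y nxy|i iI]; rewrite /L.
  - by rewrite ls onbarC.
  - rewrite lsup /=; last by rewrite (negbTE nxy).
    case: ifP => [/orP[]/andP[/eqP ex /eqP ey]|]; last by rewrite subr0.
      by move: nxy; rewrite ex ey api.
    by move: nxy; rewrite ex ey symE api.
  have [->|nia] := eqVneq i a.
    under eq_bigr => j _ do rewrite scalerBl.
    rewrite sumrB -/(resultant p lam a) hmu (bigD1 pi) //= big1 ?addr0.
      by rewrite /onbar !eqxx subrr.
    by move=> j njpi; rewrite /onbar eqxx (negbTE njpi) (negbTE napi) scale0r.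
  have nipi : i != pi by apply: contraTneq iI => ->; rewrite (disjointFl dis piP).
  rewrite -[RHS](leq i); last by rewrite !inE nia.
  by apply: eq_bigr => j _; rewrite /onbar (negbTE nia) (negbTE nipi) subr0.
move=> x y; have [bxy|nbxy] := boolP (onbar x y).
  apply: lsup => /=; apply/nandP; right; apply/negPn.
  by case/orP: bxy => /andP[/eqP-> /eqP->]; rewrite !inE eqxx piP ?orbT.
by have := lk.1 L stG x y; rewrite /L (negbTE nbxy) subr0.
Qed.

(* Pinning a removes the last degree of freedom, since the active motion
   moves a. *)
Lemma pin_isostatic : isostatic Ga p.
Proof.
split; first by move=> lam; exact: pin_stress_free.
move=> m [mz me].
have still v : v \in Pa -> m v = 0.
  move=> vPa; apply: mz; rewrite !inE negb_and negbK.
  by case/setU1P: vPa => [->|vP]; rewrite ?eqxx // (disjointFl dis vP) orbT.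
apply: (linkage_motion_zero lk mq sq); last first.
  by rewrite /strain !still ?subrr ?dotp0r // !inE ?eqxx ?pjP ?orbT.
split=> [v vI|x y exy]; first by apply: mz; rewrite !inE (negbTE vI) andbF.
have [/andP[/still -> /still ->]|bar] := boolP ((x \in Pa) && (y \in Pa)).
  by rewrite subrr dotp0r.
by apply: me; rewrite /= exy bar.
Qed.

End PinDriver.
End Linkage.

Section Replacement.
Variables (R : realFieldType) (V : finType).
Implicit Types (G : pgraph V) (d : driver V).

(* The driver replacement is again a pinned graph in the weak sense needed
   for the Maxwell counts. *)
Lemma replacement_wf G d : pinned_graph G -> valid_driver G d ->
  [/\ [disjoint inner (replacement G d) & pinned (replacement G d)],
      forall x y, edge (replacement G d) x y = edge (replacement G d) y x &
      forall x, ~~ edge (replacement G d) x x].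
Proof.
move=> [dis symE irrE _ _]; case: d => [a b|a b c|a b c|a pi pj] /=.
- by case=> nab _ _; split=> //; [exact: add_edge_sym | exact: add_edge_irr].
- by case=> _ _ nac _ _; split=> //; [exact: add_edge_sym | exact: add_edge_irr].
- case=> _ _ nac _ _; split.
  + by apply: disjointWl dis; apply: subD1set.
  + by apply: add_edge_sym => x y; rewrite symE [(x != b) && _]andbC.
  + by apply: add_edge_irr => // x; rewrite (negbTE (irrE x)).
- move=> _; split.
  + rewrite -setI_eq0; apply/eqP/setP => x; rewrite !inE.
    have [xI|] := boolP (x \in inner G); last by rewrite andbF.
    by case: eqP => [->|_] //=; rewrite (disjointFr dis xI).
  + by move=> x y; rewrite symE [(y \in _) && _]andbC.
  + by move=> x; rewrite (negbTE (irrE x)).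
Qed.

Lemma replacement_isostatic G (p : V -> 'rV[R]_2) d :
  pinned_graph G -> indep_1dof G p -> valid_driver G d -> active G p d ->
  isostatic (replacement G d) p.
Proof.
move=> pg lk + [q [mq _ sq]]; have [dis symE irrE _ _] := pg.
case: d sq => [a b|a b c|a b c|a pi pj] /= sq.
- by case=> nab _ _; apply: add_bar_isostatic => //; exists q.
- by case=> _ _ nac _ _; apply: add_bar_isostatic => //; exists q.
- by case=> ab bc nac bI dg; apply: (deg2_isostatic symE irrE lk ab bc nac bI dg mq sq).
by case=> piP pjP _ aI api; apply: (pin_isostatic dis symE lk piP pjP aI api mq sq).
Qed.

End Replacement.

Theorem mainTheorem4 (R : realFieldType) (V : finType) (G : pgraph V)
    (p : V -> 'rV[R]_2) (d : driver V) :
  pinned_graph G -> indep_1dof G p -> valid_driver G d -> active G p d ->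
  isostatic (replacement G d) p /\ pinned_isostatic_graph (replacement G d).
Proof.
move=> pg lk vd act.
have iso := replacement_isostatic pg lk vd act.
have [dis symE irrE] := replacement_wf pg vd.
by split; last exact: isostatic_pinned_isostatic_graph dis symE irrE iso.
Qed.
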